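(* For Lebesgue almost all $x\in(0,1)$, $\lim_{n\to\infty}\frac{\log M_n(x)}{\log n}=1$.
   Context: Signed Engel expansion: define $T\colon[0,1)\to[0,1)$ by: for $k\in\mathbb{N}$, $Tx=\lceil 1/x\rceil x-1$ if $x\in(\frac{1}{2k},\frac{1}{2k-1})$; $Tx=1-\lfloor 1/x\rfloor x$ if $x\in(\frac{1}{2k+1},\frac{1}{2k})$; $Tx=0$ if $x\in\{0\}\cup\{1/n\colon n\ge 2\}$. For $x\in(0,1)$, $d_1(x)=\lceil 1/x\rceil$ if $x\in[\frac{1}{2k},\frac{1}{2k-1})$ for some $k\in\mathbb{N}$, and $d_1(x)=\lfloor 1/x\rfloor$ if $x\in[\frac{1}{2k+1},\frac{1}{2k})$ for some $k\in\mathbb{N}$; $d_{n+1}(x)=d_1(T^nx)$. For irrational $x\in(0,1)$, $R_1(x)=d_1(x)$, $R_n(x)=d_n(x)/d_{n-1}(x)$ for $n\ge2$, and $M_n(x)=\max\{R_k(x)\colon 1\le k\le n\}$. *)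

From HB Require Import structures.
From mathcomp Require Import all_boot all_order all_algebra.
From mathcomp Require Import all_classical all_reals all_analysis.
Set Implicit Arguments. Unset Strict Implicit. Unset Printing Implicit Defensive.
Import Order.TTheory GRing.Theory Num.Theory.
Local Open Scope ring_scope.

Section SignedEngel.
Variable R : realType.

Definition seT (x : R) : R :=
  if `[< exists k : nat, (0 < k)%N /\
        1 / (2 * k%:R) < x /\ x < 1 / (2 * k%:R - 1) >]
  then (Num.ceil (1 / x))%:~R * x - 1
  else if `[< exists k : nat, (0 < k)%N /\
        1 / (2 * k%:R + 1) < x /\ x < 1 / (2 * k%:R) >]
  then 1 - (Num.floor (1 / x))%:~R * x
  else 0.

Definition sed1 (x : R) : R :=
  if `[< exists k : nat, (0 < k)%N /\
        1 / (2 * k%:R) <= x /\ x < 1 / (2 * k%:R - 1) >]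
  then (Num.ceil (1 / x))%:~R
  else (Num.floor (1 / x))%:~R.

Definition sed (n : nat) (x : R) : R := sed1 (iter n.-1 seT x).

Definition seR (n : nat) (x : R) : R :=
  if (n <= 1)%N then sed 1 x else sed n x / sed n.-1 x.

Definition seM (n : nat) (x : R) : R :=
  \big[Num.max/0]_(1 <= k < n.+1) seR k x.


End SignedEngel.

(* Write j = floor(1/y) for y in (0,1). The first signed Engel digit of y is the
   even one d of j, j+1, and on this branch T is affine with slope of modulus d,
   mapping onto (0, 1/j') where j' is the odd one of j, j+1. Since d j' = j (j+1),
   the event "the first digit is d and T y lies in E" has measure at most
   lambda(E)/d, and summing over j telescopes. By induction on n, among the
   y in (0, 1/m) the event "one of the next n digit ratios exceeds s" has measure
   at most 4n/(sm), and the event "all of them are at most t" has measure at most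
   (1 - 1/(4t))^n / m. For n = 2^((q+1)j), s = 2^((q+2)(j+1)), t = 2^(q(j+1)) both
   bounds are O(2^(q-j)), so by Borel-Cantelli almost every x eventually avoids
   both events. Then 2^(q(j+1)) < M_n <= 2^((q+2)(j+1)) whenever
   2^((q+1)j) <= n < 2^((q+1)(j+1)), which puts ln M_n / ln n within 3/(q+1)
   of 1. The digit events are never shown to be measurable: every estimate is
   for the Lebesgue outer measure. *)

From HB Require Import structures.
From mathcomp Require Import all_boot all_order all_algebra.
From mathcomp Require Import all_classical all_reals all_analysis.
From mathcomp Require Import ring lra zify.
Import Order.TTheory GRing.Theory Num.Theory numFieldNormedType.Exports.
Set Implicit Arguments.
Unset Strict Implicit.
Unset Printing Implicit Defensive.
Local Open Scope ring_scope.
Local Open Scope classical_set_scope.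

Lemma between_natE (F : numDomainType) (z : F) (j a : nat) : j%:R < z < j.+1%:R ->
  [/\ (z < a%:R) = (j < a)%N, (z <= a%:R) = (j < a)%N & (a%:R < z) = (a <= j)%N].
Proof.
move=> /andP[jz zj]; have lt_z (b : nat) : (b < j.+1)%N -> b%:R < z.
  by move=> bj; apply: le_lt_trans jz; rewrite ler_nat -ltnS.
have z_lt (b : nat) : (j < b)%N -> z < b%:R.
  by move=> jb; apply: lt_le_trans zj _; rewrite ler_nat.
split; apply/idP/idP.
- by move=> za; rewrite -(ltr_nat F); exact: lt_trans jz za.
- by move/z_lt.
- by move=> za; rewrite -(ltr_nat F); exact: lt_le_trans jz za.
- by move/z_lt/ltW.
- by move=> az; rewrite -ltnS -(ltr_nat F); exact: lt_trans az zj.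
- by move=> aj; apply: lt_z.
Qed.

Lemma ler_nat_frac (R : numFieldType) (X Y Z U : nat) : (0 < Y)%N -> (0 < U)%N ->
  (X * U <= Z * Y)%N -> X%:R / Y%:R <= Z%:R / U%:R :> R.
Proof.
move=> Y0 U0 h; rewrite ler_pdivrMr ?ltr0n // mulrAC ler_pdivlMr ?ltr0n //.
by rewrite -!natrM ler_nat.
Qed.

Lemma expr1B_mul1D_le1 (R : realDomainType) (a : R) (N : nat) : 0 <= a <= 1 ->
  (1 - a) ^+ N * (1 + N%:R * a) <= 1.
Proof.
move=> /andP[a0 a1]; elim: N => [|N IH]; first by rewrite expr0 mul0r addr0 mulr1.
have p : 0 <= (1 - a) ^+ N by rewrite exprn_ge0 // subr_ge0.
apply: le_trans IH; rewrite exprS [(1 - a) * _]mulrC -mulrA ler_wpM2l //.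
have N0 : 0 <= N%:R :> R by rewrite ler0n.
rewrite -natr1; nra.
Qed.

Lemma sum_inv_mulS (F : numFieldType) (m n : nat) : (0 < m <= n)%N ->
  \sum_(m <= j < n) ((j * j.+1)%:R^-1 : F) = m%:R^-1 - n%:R^-1.
Proof.
case/andP=> m0 mn.
transitivity (\sum_(m <= j < n) (- j.+1%:R^-1 - - (j%:R^-1 : F))).
  apply: eq_big_nat => j /andP[mj _].
  have j0 : j%:R != 0 :> F by rewrite pnatr_eq0 -lt0n (leq_trans m0 mj).
  by rewrite natrM -natr1; field; rewrite j0 natr1 pnatr_eq0.
by rewrite telescope_sumr // opprK addrC.
Qed.

Lemma sum_inv_mulS_le (F : realFieldType) (c : F) (m n N : nat) (P : pred nat) :
  0 <= c -> (0 < m <= n)%N -> (forall j, (m <= j < N)%N -> P j -> (j < n)%N) ->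
  \sum_(m <= j < N | P j) c / (j * j.+1)%:R <= c * (m%:R^-1 - n%:R^-1).
Proof.
move=> c0 mn Pn; rewrite -sum_inv_mulS // mulr_sumr.
rewrite (big_nat_widen _ _ _ _ _ (leq_maxl N n)).
rewrite [leRHS](big_nat_widen _ _ _ _ _ (leq_maxr N n)).
rewrite big_mkcond /= [leRHS]big_mkcond /=; apply: ler_sum_nat => j /andP[mj _].
case: ifP => [/andP[Pj jN]|_]; first by rewrite (Pn j) ?mj.
by case: ifP => // _; rewrite mulr_ge0 ?invr_ge0.
Qed.

Lemma ratio_near1 (R : realFieldType) (a b L e Q J : R) :
  0 < L -> 0 <= Q -> Q + 1 <= J -> 3 < e * (Q + 1) ->
  Q * (J + 1) * L < a -> a <= (Q + 2) * (J + 1) * L ->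
  (Q + 1) * J * L <= b -> b < (Q + 1) * (J + 1) * L ->
  `|1 - a / b| < e.
Proof.
move=> L0 Q0 QJ eQ aL aU bL bU.
have JL0 : 0 < J * L by rewrite mulr_gt0 //; lra.
have b0 : 0 < b by apply: lt_le_trans bL; rewrite -mulrA mulr_gt0 //; lra.
have e0 : 0 < e by apply: contraTT eQ; rewrite -!leNgt => e0; nra.
have eb : 3 * (J * L) < e * b by nra.
have -> : 1 - a / b = (b - a) / b by field; rewrite gt_eqF.
rewrite normrM normfV [`|b|]gtr0_norm // ltr_pdivrMr // ltr_norml; apply/andP; split; nra.
Qed.

Lemma nneseries_le_partial (R : realType) (u : (\bar R)^nat) (P : pred nat)
    (m : nat) (b : \bar R) :
  (forall k, P k -> 0 <= u k)%E ->
  (forall N, \sum_(m <= k < N | P k) u k <= b)%E ->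
  (\sum_(m <= k <oo | P k) u k <= b)%E.
Proof.
move=> u0 ub; apply: lime_le; last exact: nearW.
by apply: is_cvg_nneseries => k _; exact: u0.
Qed.

Lemma nneseries_inv_mulS_le (R : realType) (c : R) (m n : nat) (P : pred nat) :
  0 <= c -> (0 < m <= n)%N -> (forall j, (m <= j)%N -> P j -> (j < n)%N) ->
  (\sum_(m <= j <oo | P j) (c / (j * j.+1)%:R)%:E <= (c * (m%:R^-1 - n%:R^-1))%:E)%E.
Proof.
move=> c0 mn Pn; apply: nneseries_le_partial => [j _|N].
  by rewrite lee_fin mulr_ge0 ?invr_ge0.
by rewrite sumEFin lee_fin sum_inv_mulS_le // => j /andP[mj _]; exact: Pn.
Qed.

Lemma nneseries_inv_mulS_le_inv (R : realType) (c : R) (m : nat) (P : pred nat) :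
  0 <= c -> (0 < m)%N ->
  (\sum_(m <= j <oo | P j) (c / (j * j.+1)%:R)%:E <= (c / m%:R)%:E)%E.
Proof.
move=> c0 m0; apply: nneseries_le_partial => [j _|N].
  by rewrite lee_fin mulr_ge0 ?invr_ge0.
rewrite sumEFin lee_fin (le_trans (@sum_inv_mulS_le _ c m (maxn m N) N P c0 _ _)) //.
- by rewrite m0 leq_maxl.
- by move=> j /andP[_ jN] _; rewrite (leq_trans jN) ?leq_maxr.
- by rewrite ler_wpM2l // lerBlDr lerDl invr_ge0.
Qed.

Lemma outer_measure_lim_sup_set0 (T : Type) (R : realType)
    (mu : {outer_measure set T -> \bar R}) (F : (set T)^nat) :
  (\sum_(0 <= n <oo) mu (F n) < +oo)%E -> mu (lim_sup_set F) = 0%E.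
Proof.
move=> Foo; apply/eqP; rewrite eq_le outer_measure_ge0 andbT.
have tail0 := nneseries_tail_cvg Foo (fun n _ => outer_measure_ge0 mu (F n)).
rewrite -(cvg_lim _ tail0) //; apply: lime_ge; first by apply/cvg_ex; exists 0%E.
apply: nearW => N; apply: le_trans (outer_measure_sigma_subadditive_tail mu N F).
apply: le_outer_measure => x /(_ N I) [j /= Nj Fjx].
by exists j => //=; rewrite leqNgt in Nj; apply/negP.
Qed.

Section lebesgue_affine.
Variable R : realType.
Local Notation lambda := (@lebesgue_measure R).

Lemma lebesgue_measure_itv_oo (x y : R) : x <= y -> lambda `]x, y[ = (y - x)%:E.
Proof.
move=> xy; rewrite lebesgue_measure_itv /= lte_fin.
case: ltP => [_|yx]; first by rewrite -EFinD.
have -> : y = x by apply/eqP; rewrite eq_le xy yx.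
by rewrite subrr.
Qed.

Lemma lebesgue_affine_image_itv_le (a b x y : R) : a != 0 ->
  (lambda [set (a * z + b)%R | z in `]x, y[] <= `|a|%:E * wlength idfun `]x, y[)%E.
Proof.
move=> a0; rewrite wlength_itv /= lte_fin.
have [xy|yx] := ltP x y; last first.
  suff -> : [set (a * z + b)%R | z in `]x, y[] = set0 by rewrite measure0 mule0.
  apply/seteqP; split => // _ [z /= /[!in_itv] /= /andP[xz zy] _].
  by move: (lt_trans xz zy); rewrite ltNge yx.
rewrite -EFinD -EFinM; set g := fun z => a * z + b.
have [ap|an] := ltP 0 a.
  apply: (@le_trans _ _ (lambda `]g x, g y[)); first apply: le_outer_measure.
    move=> _ [z /= /[!in_itv] /= /andP[xz zy] <-].
    by rewrite /g !ltrD2r !ltr_pM2l // xz zy.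
  rewrite lebesgue_measure_itv_oo; last by rewrite lerD2r ler_pM2l // ltW.
  by rewrite lee_fin gtr0_norm // /g; lra.
have an' : a < 0 by rewrite lt_neqAle a0 an.
apply: (@le_trans _ _ (lambda `]g y, g x[)); first apply: le_outer_measure.
  move=> _ [z /= /[!in_itv] /= /andP[xz zy] <-].
  by rewrite /g !ltrD2r !ltr_nM2l // xz zy.
rewrite lebesgue_measure_itv_oo; last by rewrite lerD2r ler_nM2l // ltW.
by rewrite lee_fin ltr0_norm // /g; lra.
Qed.

Lemma lebesgue_affine_image_le (a b : R) (S : set R) : a != 0 ->
  (lambda [set (a * z + b)%R | z in S] <= `|a|%:E * lambda S)%E.
Proof.
move=> a0; have a_gt0 : 0 < `|a| by rewrite normr_gt0.
change (lambda S) with (((wlength idfun)^*)%mu S).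
rewrite measurable_realfun.outer_measure_open_itv_cover -lee_pdivrMl //.
apply: le_ereal_inf_tmp => _ [F [Fitv SF] <-]; rewrite lee_pdivrMl //.
pose G k := [set (a * z + b)%R | z in F k].
apply: (@le_trans _ _ (lambda (\bigcup_k G k))).
  by apply: le_outer_measure => _ [z /SF [k _ Fkz] <-]; exists k => //; exists z.
apply: (le_trans (outer_measure_sigma_subadditive lambda G)).
rewrite -nneseriesZl; last by move=> k _; exact: wlength_ge0.
apply: lee_nneseries => [k _ _|k _]; first exact: outer_measure_ge0.
have [[x y] /= Fk] := Fitv k; rewrite /G Fk.
exact: lebesgue_affine_image_itv_le.
Qed.

End lebesgue_affine.

(** * One step of the signed Engel map *)

Definition even_ceil (j : nat) : nat := j + odd j.
Definition odd_ceil (j : nat) : nat := j + ~~ odd j.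

Lemma even_ceil_mul_odd_ceil (j : nat) : (even_ceil j * odd_ceil j = j * j.+1)%N.
Proof.
by rewrite /even_ceil /odd_ceil; case: odd => /=; rewrite ?addn0 ?addn1 // mulnC.
Qed.

(* [D] is the digit read last and [y < 1/m] the current point; one step keeps the
   two adjacent, since after the digit [even_ceil j] the point is below
   [1/odd_ceil j]. *)
Definition adjacent_pair (D m : nat) : bool := [&& 0 < D, 0 < m, D <= m.+1 & m <= D.+1]%N.

Lemma adjacent_even_odd_ceil (j : nat) :
  (0 < j)%N -> adjacent_pair (even_ceil j) (odd_ceil j).
Proof. by rewrite /adjacent_pair /even_ceil /odd_ceil; case: odd => /=; lia. Qed.

Definition branch_slope {F : fieldType} (j : nat) : F :=
  if odd j then j.+1%:R^-1 else - j%:R^-1.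
Definition branch_shift {F : fieldType} (j : nat) : F :=
  if odd j then j.+1%:R^-1 else j%:R^-1.

Lemma normr_branch_slope (F : numFieldType) (j : nat) : (0 < j)%N ->
  `|branch_slope j : F| = (even_ceil j)%:R^-1.
Proof.
move=> j0; rewrite /branch_slope /even_ceil; case: odd => /=.
  by rewrite addn1 ger0_norm ?invr_ge0.
by rewrite addn0 normrN ger0_norm ?invr_ge0.
Qed.

Section signed_engel_step.
Variable R : realType.

Definition irr_below (m : nat) : set R := [set y | 0 < y < m%:R^-1 /\ irrational y].
Definition inv_trunc (y : R) : nat := Num.truncn y^-1.
Definition digit (y : R) : nat := even_ceil (inv_trunc y).

Lemma irrational_affine (a b : rat) (z : R) :
  irrational (ratr a * z + ratr b) -> irrational z.
Proof.
by move=> iy [q _ qz]; apply: iy; exists (a * q + b) => //; rewrite -qz rmorphD rmorphM.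
Qed.

Lemma ratr_branch_slope (j : nat) : ratr (branch_slope j) = branch_slope j :> R.
Proof.
by rewrite /branch_slope; case: odd => /=; rewrite ?rmorphN fmorphV rmorph_nat.
Qed.

Lemma ratr_branch_shift (j : nat) : ratr (branch_shift j) = branch_shift j :> R.
Proof. by rewrite /branch_shift; case: odd => /=; rewrite fmorphV rmorph_nat. Qed.

Lemma signed_engel_branchesE (y : R) (j : nat) : 0 < y -> j%:R < y^-1 < j.+1%:R ->
  [/\ `[< exists k : nat, (0 < k)%N /\
          1 / (2 * k%:R) <= y /\ y < 1 / (2 * k%:R - 1) >] = odd j,
      `[< exists k : nat, (0 < k)%N /\
          1 / (2 * k%:R) < y /\ y < 1 / (2 * k%:R - 1) >] = odd j &
      `[< exists k : nat, (0 < k)%N /\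
          1 / (2 * k%:R + 1) < y /\ y < 1 / (2 * k%:R) >] = (0 < j)%N && ~~ odd j].
Proof.
move=> y_gt0 jy; have cmp a := between_natE a jy.
have inv_le (a : nat) : (0 < a)%N -> (1 / a%:R <= y) = (j < a)%N.
  by move=> a0; have [_ E _] := cmp a; rewrite div1r invf_ple ?posrE ?ltr0n // E.
have inv_lt (a : nat) : (0 < a)%N -> (1 / a%:R < y) = (j < a)%N.
  by move=> a0; have [E _ _] := cmp a; rewrite div1r invf_plt ?posrE ?ltr0n // E.
have lt_inv (a : nat) : (0 < a)%N -> (y < 1 / a%:R) = (a <= j)%N.
  by move=> a0; have [_ _ E] := cmp a; rewrite div1r invf_pgt ?posrE ?ltr0n // E.
have two_k (k : nat) : 2 * k%:R = (2 * k)%:R :> R by rewrite natrM.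
have two_kB1 (k : nat) : (0 < k)%N -> 2 * k%:R - 1 = (2 * k).-1%:R :> R.
  by move=> k0; rewrite two_k -[in LHS](@prednK (2 * k)) ?muln_gt0 // -natr1 addrK.
have two_kS (k : nat) : 2 * k%:R + 1 = (2 * k).+1%:R :> R by rewrite two_k natr1.
split; apply: (asbool_equiv_eqP idP); split.
- move=> [k [k0 []]]; rewrite two_kB1 // two_k inv_le ?lt_inv; lia.
- by move=> oj; exists j.+1./2; rewrite two_kB1 ?two_k ?inv_le ?lt_inv; lia.
- move=> [k [k0 []]]; rewrite two_kB1 // two_k inv_lt ?lt_inv; lia.
- by move=> oj; exists j.+1./2; rewrite two_kB1 ?two_k ?inv_lt ?lt_inv; lia.
- move=> [k [k0 []]]; rewrite two_kS two_k inv_lt ?lt_inv; lia.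
- by move=> /andP[j0 ej]; exists j./2; rewrite two_kS two_k inv_lt ?lt_inv; lia.
Qed.

Lemma sed1_seT_between (y : R) (j : nat) : (0 < j)%N -> 0 < y ->
  j%:R < y^-1 < j.+1%:R ->
  sed1 y = (even_ceil j)%:R /\
  seT y = (if odd j then j.+1%:R * y - 1 else 1 - j%:R * y).
Proof.
move=> j0 y0 jy; have [c1 c1' c2] := signed_engel_branchesE y0 jy.
rewrite /sed1 /seT c1 c1' c2 j0 /even_ceil.
have /andP[jy1 jy2] := jy.
case: ifP => _ /=.
  suff -> : Num.ceil (1 / y) = j.+1%:Z by rewrite addn1.
  by apply: ceil_def; rewrite div1r -addn1 PoszD addrK intrD -!pmulrn natr1 jy1 ltW.
suff -> : Num.floor (1 / y) = j%:Z by rewrite addn0.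
by apply: floor_def; rewrite div1r intrD -!pmulrn natr1 (ltW jy1) jy2.
Qed.

Lemma inv_trunc_bounds (m : nat) (y : R) : (0 < m)%N -> irr_below m y ->
  (m <= inv_trunc y)%N /\ (inv_trunc y)%:R < y^-1 < (inv_trunc y).+1%:R.
Proof.
move=> m0 [/andP[y0 ym] iy].
have my : m%:R < y^-1 by rewrite -(invrK m%:R) ltf_pV2 ?posrE ?invr_gt0 ?ltr0n.
have yV_ge0 : 0 <= y^-1 by rewrite invr_ge0 ltW.
have /andP[jy yj] := truncn_itv yV_ge0.
split; first by rewrite /inv_trunc truncn_ge_nat // ltW.
rewrite /inv_trunc yj andbT lt_neqAle jy andbT; apply/eqP => E; apply: iy.
by exists (Num.truncn y^-1)%:R^-1 => //; rewrite fmorphV rmorph_nat E invrK.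
Qed.

Lemma irr_below_step (m : nat) (y : R) : (0 < m)%N -> irr_below m y ->
  [/\ (m <= inv_trunc y)%N, sed1 y = (digit y)%:R,
      irr_below (odd_ceil (inv_trunc y)) (seT y)
    & y = branch_slope (inv_trunc y) * seT y + branch_shift (inv_trunc y)].
Proof.
move=> m0 Iy; have [mj jy] := inv_trunc_bounds m0 Iy.
have [/andP[y0 _] iy] := Iy; set j := inv_trunc y in mj jy *.
have j0 : (0 < j)%N := leq_trans m0 mj.
have [-> ->] := sed1_seT_between j0 y0 jy.
have yE : y = branch_slope j * (if odd j then j.+1%:R * y - 1 else 1 - j%:R * y)
              + branch_shift j.
  rewrite /branch_slope /branch_shift; case: odd; field.
    by rewrite addrC natr1 pnatr_eq0.
  by rewrite pnatr_eq0 -lt0n.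
split => //; split; last first.
  by apply: (@irrational_affine (branch_slope j) (branch_shift j));
     rewrite ratr_branch_slope ratr_branch_shift -yE.
have /andP[jy1 jy2] := jy.
have jR : 0 < j%:R :> R by rewrite ltr0n.
have lt1 : j%:R * y < 1 by rewrite -(ltr_pM2r y0) mulVf ?gt_eqF in jy1.
have gt1 : 1 < j.+1%:R * y by rewrite -(ltr_pM2r y0) mulVf ?gt_eqF in jy2.
rewrite /odd_ceil; case: (boolP (odd j)) => _ /=; rewrite ?addn0 ?addn1.
- rewrite subr_gt0 gt1 /= -div1r ltr_pdivlMr //; nra.
- rewrite subr_gt0 lt1 /= -div1r ltr_pdivlMr ?ltr0n //; nra.
Qed.

End signed_engel_step.

(** * Measure of digit events *)

Section digit_measure.
Variable R : realType.
Local Notation lambda := (@lebesgue_measure R).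

(* In both predicates [D] is the digit preceding the first digit of [y]. *)
Fixpoint some_ratio_gt (n : nat) (s : R) (D : nat) (y : R) : Prop :=
  if n is n'.+1 then s * D%:R < (digit y)%:R \/ some_ratio_gt n' s (digit y) (seT y)
  else False.

Fixpoint all_ratios_le (n : nat) (t : R) (D : nat) (y : R) : Prop :=
  if n is n'.+1 then (digit y)%:R <= t * D%:R /\ all_ratios_le n' t (digit y) (seT y)
  else True.

(* The branch of [j] is the affine image of [irr_below (odd_ceil j)] with slope
   [1/even_ceil j], and [even_ceil j * odd_ceil j = j * j.+1]. *)
Lemma lebesgue_digit_step (m : nat) (A : pred nat) (P : nat -> set R) (c : R) :
  (0 < m)%N ->
  (forall j, (m <= j)%N -> A (even_ceil j) ->
     lambda (irr_below (odd_ceil j) `&` P (even_ceil j)) <= (c / (odd_ceil j)%:R)%:E)%E ->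
  (lambda (irr_below m `&` [set y | A (digit y) /\ P (digit y) (seT y)]) <=
   \sum_(m <= j <oo | A (even_ceil j)) (c / (j * j.+1)%:R)%:E)%E.
Proof.
move=> m0 HP; pose Q j := if A (even_ceil j) && (m <= j)%N then
  [set (branch_slope j * z + branch_shift j)%R | z in
    irr_below (odd_ceil j) `&` P (even_ceil j)] else set0.
apply: (@le_trans _ _ (lambda (\bigcup_j Q j))).
  apply: le_outer_measure => y [Iy [Ay Py]].
  have [mj _ Iz yE] := irr_below_step m0 Iy.
  by exists (inv_trunc y) => //; rewrite /Q Ay mj /=; exists (seT y).
apply: (le_trans (outer_measure_sigma_subadditive lambda Q)).
rewrite [leRHS]eseries_cond [leRHS]eseries_mkcond; apply: lee_nneseries => [j _ _|j _].
  exact: outer_measure_ge0.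
rewrite /Q; case: ifPn => [/andP[Aj mj]|_]; last by rewrite measure0.
have j0 : (0 < j)%N := leq_trans m0 mj.
have slope0 : branch_slope j != 0 :> R.
  by rewrite -normr_eq0 normr_branch_slope // invr_eq0 pnatr_eq0 /even_ceil; lia.
apply: (le_trans (lebesgue_affine_image_le _ _ slope0)).
rewrite normr_branch_slope //; apply: le_trans (lee_wpmul2l _ (HP j mj Aj)) _.
  by rewrite lee_fin invr_ge0.
by rewrite -EFinM mulrCA -invfM -natrM even_ceil_mul_odd_ceil.
Qed.

Lemma lebesgue_digit_gt (s : R) (D m : nat) : 2 <= s -> adjacent_pair D m ->
  (lambda (irr_below m `&` [set y | (s * D%:R < (digit y)%:R)%R]) <=
   (4 / (s * m%:R))%:E)%E.
Proof.
move=> s2 /and4P[D0 m0 _ mD].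
have D1 : 1 <= D%:R :> R by rewrite ler1n.
have sD1 : 0 < s * D%:R - 1 by nra.
apply: (@le_trans _ _ (lambda `]0, (s * D%:R - 1)^-1[)).
  apply: le_outer_measure => y [Iy /= sDy].
  have [_ /andP[jy _]] := inv_trunc_bounds m0 Iy; have [/andP[y0 _] _] := Iy.
  have : (digit y <= (inv_trunc y).+1)%N by rewrite /digit /even_ceil; lia.
  rewrite -(ler_nat R) -natr1 => dj.
  rewrite /= in_itv /= y0 /= -(invrK y) ltf_pV2 ?posrE ?invr_gt0 //; lra.
rewrite lebesgue_measure_itv_oo ?subr0 ?lee_fin; last by rewrite invr_ge0 ltW.
rewrite -[4 / _]invf_div lef_pV2 ?posrE ?divr_gt0 ?mulr_gt0 ?ltr0n //; last lra.
have mD1 : m%:R <= D%:R + 1 :> R by rewrite natr1 ler_nat.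
rewrite ler_pdivrMr //; nra.
Qed.

Lemma lebesgue_some_ratio_gt (s : R) (n D m : nat) : 2 <= s -> adjacent_pair D m ->
  (lambda (irr_below m `&` some_ratio_gt n s D) <= (4 * n%:R / (s * m%:R))%:E)%E.
Proof.
move=> s2; have s0 : 0 < s by lra.
elim: n D m => [|n IH] D m Dm.
  rewrite mulr0 mul0r; apply: (@le_trans _ _ (lambda set0)); last by rewrite measure0.
  by apply: le_outer_measure => y [].
have /and4P[_ m0 _ _] := Dm.
apply: (@le_trans _ _ (lambda (irr_below m `&` [set y | (s * D%:R < (digit y)%:R)%R] `|`
    irr_below m `&` [set y | predT (digit y) /\ some_ratio_gt n s (digit y) (seT y)]))).
  by apply: le_outer_measure => y [Iy [sDy|Sy]]; [left|right].
apply: (le_trans (outer_measureU2 lambda _ _)).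
have -> : 4 * n.+1%:R / (s * m%:R) = 4 / (s * m%:R) + 4 * n%:R / s / m%:R.
  by rewrite -natr1; field; rewrite pnatr_eq0 -lt0n m0 gt_eqF.
rewrite EFinD leeD ?lebesgue_digit_gt //.
apply: (le_trans (lebesgue_digit_step (c := 4 * n%:R / s) m0 _)).
  move=> j mj _; rewrite -(mulrA (4 * n%:R)) -invfM.
  exact: IH (adjacent_even_odd_ceil (leq_trans m0 mj)).
by apply: nneseries_inv_mulS_le_inv => //; rewrite divr_ge0 ?mulr_ge0 // ltW.
Qed.

Lemma lebesgue_all_ratios_le (t : R) (n D m : nat) : 1 <= t -> adjacent_pair D m ->
  (lambda (irr_below m `&` all_ratios_le n t D) <= ((1 - (4 * t)^-1) ^+ n / m%:R)%:E)%E.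
Proof.
move=> t1; set rho := 1 - (4 * t)^-1.
have t0 : 0 < t by lra.
have rho0 : 0 <= rho by rewrite subr_ge0 invf_le1 ?mulr_gt0 //; lra.
elim: n D m => [|n IH] D m Dm; have /and4P[_ m0 Dm1 _] := Dm.
  apply: (@le_trans _ _ (lambda `]0, m%:R^-1[)).
    by apply: le_outer_measure => y [[/andP[y0 ym] _] _]; rewrite /= in_itv /= y0 ym.
  by rewrite lebesgue_measure_itv_oo ?invr_ge0 // subr0 expr0 div1r.
have tD0 : 0 <= t * D%:R by rewrite mulr_ge0 // ltW.
set K := Num.truncn (t * D%:R).
apply: (le_trans (lebesgue_digit_step
  (A := fun e => e%:R <= t * D%:R) (c := rho ^+ n) m0 _)).
  by move=> j mj _; exact: IH (adjacent_even_odd_ceil (leq_trans m0 mj)).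
apply: le_trans (nneseries_inv_mulS_le (n := maxn m K.+1) _ _ _) _.
- exact: exprn_ge0.
- by rewrite m0 leq_maxl.
- move=> j _ /= jD; rewrite leq_max ltnS /K truncn_ge_nat // orbC (le_trans _ jD) //.
  by rewrite ler_nat /even_ceil leq_addr.
have /andP[Kt _] := truncn_itv tD0; rewrite -/K in Kt.
have HM : (maxn m K.+1)%:R <= 4 * t * m%:R.
  have m1 : 1 <= m%:R :> R by rewrite ler1n.
  have Dm' : D%:R <= m%:R + 1 :> R by rewrite natr1 ler_nat.
  have [->|->] : maxn m K.+1 = m \/ maxn m K.+1 = K.+1 by lia.
    nra.
  rewrite -natr1; nra.
have M0 : 0 < (maxn m K.+1)%:R :> R by rewrite ltr0n leq_max m0.
rewrite lee_fin exprS mulrAC [leRHS]mulrC ler_wpM2l ?exprn_ge0 //.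
have -> : rho / m%:R = m%:R^-1 - (4 * t * m%:R)^-1.
  by rewrite /rho; field; rewrite pnatr_eq0 -lt0n m0 gt_eqF.
have tm0 : 0 < 4 * t * m%:R by rewrite !mulr_gt0 // ltr0n.
by rewrite lerD2l lerN2 lef_pV2 ?posrE.
Qed.

End digit_measure.

Section digits_of_x.
Variable R : realType.

Lemma irr_below_le (m m' : nat) : (0 < m <= m')%N -> irr_below m' `<=` @irr_below R m.
Proof.
case/andP=> m0 mm' y [/andP[y0 ym'] iy]; split => //; rewrite y0 /=.
by apply: lt_le_trans ym' _; rewrite lef_pV2 ?posrE ?ltr0n ?ler_nat // (leq_trans m0).
Qed.

Lemma irr_below1_iter (x : R) (i : nat) :
  irr_below 1 x -> irr_below 1 (iter i (@seT R) x).
Proof.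
move=> Ix; elim: i => [|i IH] //=; have [mj _ Iz _] := irr_below_step (isT : 0 < 1)%N IH.
by apply: irr_below_le Iz; rewrite /odd_ceil; lia.
Qed.

(* [digits x 0 = 1], so that [seR 1 x = digits x 1 / digits x 0]. *)
Definition digits (x : R) (i : nat) : nat :=
  if i is i'.+1 then digit (iter i' (@seT R) x) else 1%N.

Lemma digits_gt0 (x : R) (i : nat) : irr_below 1 x -> (0 < digits x i)%N.
Proof.
move=> Ix; case: i => //= i.
have [mj _ _ _] := irr_below_step (isT : 0 < 1)%N (irr_below1_iter i Ix).
by rewrite /digit /even_ceil; lia.
Qed.

Lemma seR_digits (x : R) (k : nat) : irr_below 1 x -> (0 < k)%N ->
  seR k x = (digits x k)%:R / (digits x k.-1)%:R.
Proof.
move=> Ix; case: k => // k _; rewrite /seR /sed /=.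
have sed1_iter i : sed1 (iter i (@seT R) x) = (digit (iter i (@seT R) x))%:R.
  by have [_ -> _ _] := irr_below_step (isT : 0 < 1)%N (irr_below1_iter i Ix).
case: k => [|k] /=; first by rewrite divr1 (sed1_iter 0).
by rewrite (sed1_iter k.+1) sed1_iter.
Qed.

Lemma some_ratio_gt_digits (x s : R) (n i : nat) :
  (exists2 k, (i < k <= i + n)%N & s * (digits x k.-1)%:R < (digits x k)%:R) ->
  some_ratio_gt n s (digits x i) (iter i (@seT R) x).
Proof.
elim: n i => [|n IH] i [k ikn sk]; first lia.
have [ki|ki] := eqVneq k i.+1; first by left; rewrite ki in sk.
by right; apply: (IH i.+1); exists k => //; lia.
Qed.

Lemma all_ratios_le_digits (x t : R) (n i : nat) :
  (forall k, (i < k <= i + n)%N -> (digits x k)%:R <= t * (digits x k.-1)%:R) ->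
  all_ratios_le n t (digits x i) (iter i (@seT R) x).
Proof.
elim: n i => [|n IH] i Hk //=; split; first by apply: (Hk i.+1); lia.
by apply: (IH i.+1) => k ik; apply: Hk; lia.
Qed.

Lemma seR_le_seM (x : R) (n k : nat) : (0 < k <= n)%N -> seR k x <= seM n x.
Proof.
move=> kn; apply: (@le_bigmax_seq _ _ _ _ _ k xpredT) => //.
by rewrite mem_index_iota; lia.
Qed.

Lemma seM_le (x s : R) (N n : nat) : irr_below 1 x -> 0 <= s -> (n <= N)%N ->
  ~ some_ratio_gt N s 1 x -> seM n x <= s.
Proof.
move=> Ix s0 nN notS; rewrite /seM big_seq_cond; apply: bigmax_le => // k /andP[+ _].
rewrite mem_index_iota => /andP[k0 kn]; rewrite leNgt; apply/negP => sk; apply: notS.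
apply: (some_ratio_gt_digits (i := 0)); exists k; first lia.
by move: sk; rewrite seR_digits // ltr_pdivlMr // ltr0n digits_gt0.
Qed.

Lemma lt_seM (x t : R) (N n : nat) : irr_below 1 x -> (N <= n)%N ->
  ~ all_ratios_le N t 1 x -> t < seM n x.
Proof.
move=> Ix Nn notA; rewrite ltNge; apply/negP => Mt; apply: notA.
apply: (all_ratios_le_digits (i := 0)) => k /andP[k0 kN].
have : seR k x <= t by apply: le_trans Mt; apply: seR_le_seM; lia.
by rewrite seR_digits // ler_pdivrMr // ltr0n digits_gt0.
Qed.

End digits_of_x.

(** * The exceptional sets *)

Section exceptional_sets.
Variable R : realType.
Local Notation lambda := (@lebesgue_measure R).

Definition large_ratio_set (q j : nat) : set R :=
  irr_below 1 `&` some_ratio_gt (2 ^ (q.+1 * j.+1)) (2 ^ (q.+2 * j.+1))%:R 1.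

Definition small_ratios_set (q j : nat) : set R :=
  irr_below 1 `&` all_ratios_le (2 ^ (q.+1 * j)) (2 ^ (q * j.+1))%:R 1.

Definition exceptional_set (q : nat) : set R :=
  lim_sup_set (fun j => large_ratio_set q j `|` small_ratios_set q j).

Lemma lebesgue_large_ratio_set (q j : nat) :
  (lambda (large_ratio_set q j) <= ((2 ^ q.+2)%:R / (2 ^ j)%:R)%:E)%E.
Proof.
have s2 : 2 <= (2 ^ (q.+2 * j.+1))%:R :> R.
  by rewrite -[2]/(2%:R) ler_nat -[X in (X <= _)%N]expn1 leq_pexp2l //; lia.
apply: (le_trans (lebesgue_some_ratio_gt _ s2 (isT : adjacent_pair 1 1))).
rewrite lee_fin mulr1 -[4]/(4%:R) -natrM ler_nat_frac ?expn_gt0 //.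
by rewrite -[4%N]/(2 ^ 2)%N -!expnD leq_pexp2l //; nia.
Qed.

Lemma lebesgue_small_ratios_set (q j : nat) :
  (lambda (small_ratios_set q j) <= ((2 ^ q.+2)%:R / (2 ^ j)%:R)%:E)%E.
Proof.
set t : R := (2 ^ (q * j.+1))%:R; set N := (2 ^ (q.+1 * j))%N.
have t1 : 1 <= t by rewrite ler1n expn_gt0.
apply: (le_trans (lebesgue_all_ratios_le _ t1 (isT : adjacent_pair 1 1))).
rewrite lee_fin divr1; set a := (4 * t)^-1.
have a0 : 0 < a by rewrite invr_gt0 mulr_gt0 //; lra.
have a1 : a <= 1 by rewrite invf_le1 ?mulr_gt0 //; lra.
have N0 : 0 < N%:R :> R by rewrite ltr0n expn_gt0.
have Na0 : 0 < 1 + N%:R * a by rewrite addr_gt0 // mulr_gt0.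
have := expr1B_mul1D_le1 N (introT andP (conj (ltW a0) a1)).
rewrite -ler_pdivlMr // mul1r => /le_trans; apply.
apply: (@le_trans _ _ (N%:R * a)^-1); first by rewrite lef_pV2 ?posrE ?mulr_gt0 // lerDr.
rewrite invfM /a invrK /t -[4]/(4%:R) -natrM mulrC ler_nat_frac ?expn_gt0 //.
by rewrite /N -[4%N]/(2 ^ 2)%N -!expnD leq_pexp2l //; nia.
Qed.

Lemma lebesgue_ratio_setU (q j : nat) :
  (lambda (large_ratio_set q j `|` small_ratios_set q j) <=
   ((2 ^ q.+4)%:R / (2 ^ (j + 1))%:R)%:E)%E.
Proof.
apply: (le_trans (outer_measureU2 lambda _ _)).
apply: le_trans (leeD (lebesgue_large_ratio_set q j) (lebesgue_small_ratios_set q j)) _.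
rewrite -EFinD lee_fin !expnS addn1 expnS !natrM; lra.
Qed.

Lemma negligible_exceptional_set (q : nat) : lambda.-negligible (exceptional_set q).
Proof.
apply/negligible_outer_measure/outer_measure_lim_sup_set0.
apply: (le_lt_trans (lee_nneseries _ (fun j _ => lebesgue_ratio_setU q j))).
  by move=> j _ _; exact: outer_measure_ge0.
by rewrite (cvg_lim _ (@cvg_geometric_eseries_half R (2 ^ q.+4)%:R 0)) ?ltry.
Qed.

End exceptional_sets.

Section ln_seM_limit.
Variable R : realType.

Lemma seM_bracket (x : R) (q j n : nat) : irr_below 1 x ->
  ~ large_ratio_set q j x -> ~ small_ratios_set q j x ->
  (2 ^ (q.+1 * j) <= n < 2 ^ (q.+1 * j.+1))%N ->
  (2 ^ (q * j.+1))%:R < seM n x <= (2 ^ (q.+2 * j.+1))%:R.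
Proof.
move=> Ix nL nS /andP[nlo nhi]; apply/andP; split.
  by apply: (lt_seM (N := 2 ^ (q.+1 * j))) => // h; apply: nS.
by apply: (seM_le (N := 2 ^ (q.+1 * j.+1))) => //; [exact: ltnW | move=> h; apply: nL].
Qed.

Lemma ln_seM_ratio_cvg (x : R) : irr_below 1 x -> (forall q, ~ exceptional_set q x) ->
  (fun n : nat => ln (seM n x) / ln (n%:R : R)) @ \oo --> (1 : R).
Proof.
move=> Ix regular; apply/cvgrPdist_lt => e e0.
set q := Num.truncn (3 / e).
have eq3 : 3 < e * (q%:R + 1).
  by rewrite natr1 mulrC -ltr_pdivrMr // truncnS_gt.
have [J HJ] : exists J, forall j, (J <= j)%N ->
    ~ large_ratio_set q j x /\ ~ small_ratios_set q j x.
  have /existsNP[J HJ] := regular q; exists J => j Jj.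
  by split => Fj; apply: HJ => _; exists j => //; [left|right].
exists (2 ^ (q.+1 * maxn J q.+1))%N => // n /= Hn.
have p1 : (1 < 2 ^ q.+1)%N by rewrite -{1}(expn0 2) ltn_exp2l.
have n0 : (0 < n)%N by apply: leq_trans Hn; rewrite expn_gt0.
set j := trunc_log (2 ^ q.+1) n.
have nj : (2 ^ (q.+1 * j) <= n < 2 ^ (q.+1 * j.+1))%N.
  by rewrite !expnM trunc_logP ?trunc_log_ltn.
have Jj : (maxn J q.+1 <= j)%N by apply: trunc_log_max; rewrite -?expnM.
have [nL nS] := HJ j (leq_trans (leq_maxl _ _) Jj).
have /andP[Ml Mu] := seM_bracket Ix nL nS nj.
have pow_pos k : 0 < (2 ^ k)%:R :> R by rewrite ltr0n expn_gt0.
have M0 : 0 < seM n x := lt_trans (pow_pos _) Ml.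
have ln2E (k l : nat) : k%:R * l%:R * ln 2 = ln ((2 ^ (k * l))%:R : R).
  by rewrite natrX lnXn // -[RHS]mulr_natl natrM.
have q1 : q%:R + 1 = q.+1%:R :> R by rewrite natr1.
have q2 : q%:R + 2 = q.+2%:R :> R by rewrite -!natr1; lra.
have j1 : j%:R + 1 = j.+1%:R :> R by rewrite natr1.
apply: (@ratio_near1 _ _ _ (ln 2) e q%:R j%:R) => //.
- by rewrite ln_gt0 // ltr1n.
- by rewrite q1 ler_nat (leq_trans (leq_maxr _ _) Jj).
- by rewrite j1 ln2E ltr_ln ?posrE.
- by rewrite q2 j1 ln2E ler_ln ?posrE.
- rewrite q1 ln2E ler_ln ?posrE ?ltr0n ?expn_gt0 // ler_nat.
  by case/andP: nj.
- rewrite q1 j1 ln2E ltr_ln ?posrE ?ltr0n ?expn_gt0 // ltr_nat.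
  by case/andP: nj.
Qed.

End ln_seM_limit.

Theorem corollary1p9 (R : realType) :
  {ae (@lebesgue_measure R), forall x : R,
     0 < x < 1 -> @irrational R x ->
     (fun n : nat => ln (seM n x) / ln (n%:R : R)) @ \oo --> (1 : R)}.
Proof.
have null := negligible_bigcup (@negligible_exceptional_set R).
apply: negligibleS null => x /= notcvg; apply: contrapT => regular.
apply: notcvg => /andP[x0 x1] ix; apply: ln_seM_ratio_cvg.
  by split; rewrite ?invr1 ?x0.
by move=> q Bq; apply: regular; exists q.
Qed.
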